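(* (i) If $f(z)=z+\sum_{n=2}^\infty a_nz^n\in\mathcal{A}$ satisfies $\sum_{n=2}^\infty(2n-1)|a_n|\le1$, then $f\in\mathcal{S}^*_{car}$. (ii) For $n\in\{2,3,\ldots\}$ and $a_n\in\mathbb{C}$, the function $f_n(z)=z+a_nz^n$ belongs to $\mathcal{S}^*_{car}$ if and only if $|a_n|\le 1/(2n-1)$.
   Context: $\mathbb{D}=\{z:|z|<1\}$; $\mathcal{A}$ is the class of analytic $f$ on $\mathbb{D}$ with $f(0)=0$, $f'(0)=1$. $F\prec G$ means $F=G\circ w$ for an analytic $w:\mathbb{D}\to\mathbb{D}$ with $w(0)=0$. $\mathcal{S}^*_{car}$ is the class of $f\in\mathcal{A}$ with $zf'(z)/f(z)\prec 1+z+z^2/2$ in $\mathbb{D}$. *)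

From Stdlib Require Import Reals.
From Coquelicot Require Import Coquelicot.
Open Scope R_scope.

Definition inD (z : C) : Prop := Cmod z < 1.

Definition analytic_D (f : C -> C) : Prop :=
  forall z, inD z -> @ex_derive C_AbsRing C_NormedModule f z.

Definition classA (f : C -> C) : Prop :=
  analytic_D f /\ f 0%R = 0%R /\ C_derive f 0%R = 1%R.

Definition subordinate (F G : C -> C) : Prop :=
  exists w : C -> C, analytic_D w /\ (forall z, inD z -> inD (w z)) /\
    w 0%R = 0%R /\ forall z, inD z -> F z = G (w z).

Definition phi_car (z : C) : C := (1%R + z + z * z / 2%R)%C.

(* z f'(z) / f(z), extended at the removable singularity z = 0 by its limit 1
   (for f in A). *)
Definition starlike_quot (f : C -> C) (z : C) : C :=
  if Req_EM_T (Cmod z) 0 then 1%R else (z * C_derive f z / f z)%C.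

(* S*_car: f in A, z f'/f is defined (f nonvanishing on D \ {0}) and
   z f'(z)/f(z) is subordinate to 1 + z + z^2/2. *)
Definition Scar (f : C -> C) : Prop :=
  classA f /\ (forall z, inD z -> z <> 0%R -> f z <> 0%R) /\
  subordinate (starlike_quot f) phi_car.

(* Coefficient sequence of z + sum_{n>=2} a_n z^n. *)
Definition coeffs (a : nat -> C) (n : nat) : C :=
  match n with 0 => 0%R | 1 => 1%R | _ => a n end.

(* Write f = z G, so that z f'/f = F/G with F = f'.  Comparing coefficients, the condition
   sum (2n-1)|a_n| <= 1 gives 2|F - G| + |G - 1| <= |z| < 1, hence |z f'/f - 1| < 1/2.  That
   disc is subordinate to phi_car: since phi_car w = (1 + (1 + w)^2)/2, the Schwarz function
   is w = sqrt(2 z f'/f - 1) - 1, and the principal square root maps |u - 1| < 1 into itself.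
   For f = z + a z^n the bound is sharp: if |a| > 1/(2n-1), at a point of the disc where
   a z^(n-1) = -1/(2n-1) one finds z f'/f = 1/2 = phi_car(-1), a value phi_car does not take
   on the disc. *)

From Stdlib Require Import Reals Lra Psatz Lia ClassicalEpsilon.
From Coquelicot Require Import Coquelicot.
Open Scope R_scope.

Local Notation is_seriesC := (@is_series C_AbsRing C_NormedModule).
Local Notation is_pseriesC := (@is_pseries C_AbsRing C_NormedModule).

(** * Complex differentiability *)

Definition near (z : C) (P : C -> Prop) : Prop :=
  exists d, 0 < d /\ forall y, Cmod (y - z)%C < d -> P y.

Lemma near_and (z : C) (P Q : C -> Prop) : near z P -> near z Q -> near z (fun y => P y /\ Q y).
Proof.
intros [d1 [Hd1 HP]] [d2 [Hd2 HQ]]. exists (Rmin d1 d2). split.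
- now apply Rmin_glb_lt.
- intros y Hy. split.
  + apply HP. eapply Rlt_le_trans; [exact Hy | apply Rmin_l].
  + apply HQ. eapply Rlt_le_trans; [exact Hy | apply Rmin_r].
Qed.

Lemma near_mono (z : C) (P Q : C -> Prop) : (forall y, P y -> Q y) -> near z P -> near z Q.
Proof. intros HPQ [d [Hd HP]]. exists d. split; auto. Qed.

Lemma near_self (z : C) (P : C -> Prop) : near z P -> P z.
Proof.
intros [d [Hd HP]]. apply HP. replace (z - z)%C with (RtoC 0) by ring. now rewrite Cmod_0.
Qed.

Lemma near_center (z : C) (d : R) : 0 < d -> near z (fun y => Cmod (y - z)%C < d).
Proof. intros Hd. exists d. split; auto. Qed.

Lemma near_ball (z : C) (r : R) : Cmod z < r -> near z (fun y => Cmod y < r).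
Proof.
intros Hz. apply (near_mono z (fun y => Cmod (y - z)%C < r - Cmod z)).
- intros y Hy. pose proof (Cmod_triangle (y - z) z) as Htri.
  replace (y - z + z)%C with y in Htri by ring. lra.
- apply near_center. lra.
Qed.

Lemma near_neq0 (z : C) : z <> 0%R -> near z (fun y => y <> 0%R).
Proof.
intros Hz. apply (near_mono z (fun y => Cmod (y - z)%C < Cmod z)).
- intros y Hy ->. replace (0 - z)%C with (- z)%C in Hy by ring. rewrite Cmod_opp in Hy. lra.
- apply near_center. exact (proj1 (Cmod_gt_0 z) Hz).
Qed.

Lemma near_Re_pos (u : C) : 0 < Re u -> near u (fun v => 0 < Re v).
Proof.
intros Hu. apply (near_mono u (fun v => Cmod (v - u)%C < Re u)).
- intros v Hv. pose proof (re_le_Cmod (v - u)) as Hre. change (Re (v - u)%C) with (Re v - Re u) in Hre.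
  pose proof (Rabs_maj2 (Re v - Re u)). lra.
- now apply near_center.
Qed.

Definition Cdiff (f : C -> C) (z l : C) : Prop :=
  forall eps, 0 < eps -> near z (fun y => Cmod (f y - f z - (y - z) * l)%C <= eps * Cmod (y - z)%C).

Definition Ccont (f : C -> C) (z : C) : Prop :=
  forall eps, 0 < eps -> near z (fun y => Cmod (f y - f z)%C <= eps).

Lemma is_derive_epsilon_delta {K : AbsRing} {V : NormedModule K} (f : K -> V) (x : K) (l : V) :
  is_derive f x l <->
  forall eps, 0 < eps -> exists d, 0 < d /\ forall y, abs (minus y x) < d ->
    norm (minus (minus (f y) (f x)) (scal (minus y x) l)) <= eps * abs (minus y x).
Proof.
split.
- intros [_ H] eps Heps. destruct (H x (fun P HP => HP) (mkposreal eps Heps)) as [d Hd].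
  exists d. split; [apply cond_pos | exact Hd].
- intros H. split; [apply is_linear_scal_l |].
  intros x' Hx'. apply (@is_filter_lim_locally_unique K (AbsRing_NormedModule K)) in Hx'. subst x'.
  intros eps. destruct (H eps (cond_pos eps)) as [d [Hd H1]].
  exists (mkposreal d Hd). exact H1.
Qed.

(* [C] carries two normed-module structures over [C_AbsRing]: [C_NormedModule], used in the
   statement, and [AbsRing_NormedModule C_AbsRing], used by Coquelicot's product and chain
   rules.  [Cdiff] is the common epsilon-delta form of both derivatives. *)
Lemma Cdiff_is_derive (f : C -> C) (z l : C) : Cdiff f z l <-> @is_derive C_AbsRing C_NormedModule f z l.
Proof. symmetry. exact (@is_derive_epsilon_delta C_AbsRing C_NormedModule f z l). Qed.

Lemma Cdiff_is_derive_ring (f : C -> C) (z l : C) :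
  Cdiff f z l <-> @is_derive C_AbsRing (AbsRing_NormedModule C_AbsRing) f z l.
Proof. symmetry. exact (@is_derive_epsilon_delta C_AbsRing (AbsRing_NormedModule C_AbsRing) f z l). Qed.

Lemma Cdiff_ext_near (f g : C -> C) (z l : C) : near z (fun y => f y = g y) -> Cdiff f z l -> Cdiff g z l.
Proof.
intros Hfg Hf eps Heps. rewrite <- (near_self z _ Hfg).
apply (near_mono z (fun y => f y = g y /\ Cmod (f y - f z - (y - z) * l)%C <= eps * Cmod (y - z)%C)).
- intros y [<- H]. exact H.
- exact (near_and z _ _ Hfg (Hf eps Heps)).
Qed.

Lemma Ccont_near (f : C -> C) (z : C) (P : C -> Prop) :
  Ccont f z -> near (f z) P -> near z (fun y => P (f y)).
Proof.
intros Hf [d [Hd HP]]. apply (near_mono z (fun y => Cmod (f y - f z)%C <= d / 2)).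
- intros y Hy. apply HP. lra.
- apply Hf. lra.
Qed.

Lemma Ccont_comp (f g : C -> C) (z : C) : Ccont f (g z) -> Ccont g z -> Ccont (fun y => f (g y)) z.
Proof. intros Hf Hg eps Heps. exact (Ccont_near g z _ Hg (Hf eps Heps)). Qed.

Lemma Ccont_scal (c : C) (f : C -> C) (z : C) : Ccont f z -> Ccont (fun y => c * f y)%C z.
Proof.
intros Hf eps Heps. pose proof (Cmod_ge_0 c) as Hc.
apply (near_mono z (fun y => Cmod (f y - f z)%C <= eps / (Cmod c + 1))).
- intros y Hy. replace (c * f y - c * f z)%C with (c * (f y - f z))%C by ring.
  rewrite Cmod_mult. apply Rle_trans with (Cmod c * (eps / (Cmod c + 1))).
  + apply Rmult_le_compat_l; assumption.
  + apply Rmult_le_reg_r with (Cmod c + 1); [lra |].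
    replace (Cmod c * (eps / (Cmod c + 1)) * (Cmod c + 1)) with (Cmod c * eps) by (field; lra). nra.
- apply Hf. apply Rdiv_lt_0_compat; lra.
Qed.

Lemma Ccont_inv (w : C) : w <> 0%R -> Ccont Cinv w.
Proof.
intros Hw eps Heps. pose proof (proj1 (Cmod_gt_0 w) Hw) as Hm. set (m := Cmod w) in *.
apply (near_mono w (fun v => Cmod (v - w)%C < m / 2 /\ Cmod (v - w)%C < eps * (m * m) / 2)).
2: { apply near_and; apply near_center. lra. apply Rdiv_lt_0_compat; [apply Rmult_lt_0_compat|]; nra. }
intros v [H1 H2].
assert (Hv : m / 2 <= Cmod v).
{ pose proof (Cmod_triangle (w - v) v) as Htri. replace (w - v + v)%C with w in Htri by ring.
  replace (w - v)%C with (- (v - w))%C in Htri by ring. rewrite Cmod_opp in Htri. fold m in Htri. lra. }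
assert (Hv0 : v <> 0%R) by (intros ->; rewrite Cmod_0 in Hv; lra).
replace (/ v - / w)%C with (- (v - w) * (/ v * / w))%C by (field; auto).
rewrite Cmod_mult, Cmod_opp, Cmod_mult, !Cmod_inv by auto. fold m.
assert (Hinv : / Cmod v <= 2 / m).
{ replace (2 / m) with (/ (m / 2)) by (field; lra). apply Rinv_le_contravar; lra. }
pose proof (Cmod_ge_0 (v - w)) as Hvw.
apply Rle_trans with (Cmod (v - w)%C * (2 / m * / m)).
- apply Rmult_le_compat_l; [exact Hvw |]. apply Rmult_le_compat_r; [left; apply Rinv_0_lt_compat |]; lra.
- replace (Cmod (v - w)%C * (2 / m * / m)) with (Cmod (v - w)%C / (m * m / 2)) by (field; lra).
  apply Rmult_le_reg_r with (m * m / 2); [nra |].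
  unfold Rdiv at 1. rewrite Rmult_assoc, Rinv_l by nra. nra.
Qed.

Lemma Cdiff_caratheodory (f k : C -> C) (z : C) :
  Ccont k z -> near z (fun y => f y - f z = (y - z) * k y)%C -> Cdiff f z (k z).
Proof.
intros Hk Hf eps Heps. refine (near_mono z _ _ _ (near_and z _ _ Hf (Hk eps Heps))).
intros y [E H]. rewrite E.
replace ((y - z) * k y - (y - z) * k z)%C with ((y - z) * (k y - k z))%C by ring.
rewrite Cmod_mult, Rmult_comm. apply Rmult_le_compat_r; [apply Cmod_ge_0 | exact H].
Qed.

Lemma Cdiff_inv (z : C) : z <> 0%R -> Cdiff Cinv z (- / z * / z)%C.
Proof.
intros Hz. apply (Cdiff_caratheodory Cinv (fun y => - / z * / y)%C).
- apply Ccont_scal, Ccont_inv, Hz.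
- refine (near_mono z _ _ _ (near_neq0 z Hz)). intros y Hy. field. auto.
Qed.

Lemma Cdiff_const (c z : C) : Cdiff (fun _ => c) z 0%R.
Proof. apply Cdiff_is_derive_ring. apply (@is_derive_const C_AbsRing). Qed.

Lemma Cdiff_id (z : C) : Cdiff (fun y => y) z 1%R.
Proof. apply Cdiff_is_derive_ring. apply (@is_derive_id C_AbsRing). Qed.

Lemma Cdiff_plus (f g : C -> C) (z a b : C) :
  Cdiff f z a -> Cdiff g z b -> Cdiff (fun y => f y + g y)%C z (a + b)%C.
Proof.
rewrite !Cdiff_is_derive_ring. intros Hf Hg.
exact (@is_derive_plus C_AbsRing (AbsRing_NormedModule C_AbsRing) f g z a b Hf Hg).
Qed.

Lemma Cdiff_mult (f g : C -> C) (z a b : C) :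
  Cdiff f z a -> Cdiff g z b -> Cdiff (fun y => f y * g y)%C z (a * g z + f z * b)%C.
Proof.
rewrite !Cdiff_is_derive_ring. intros Hf Hg.
exact (@is_derive_mult C_AbsRing f g z a b Hf Hg Cmult_comm).
Qed.

Lemma Cdiff_comp (f g : C -> C) (z a b : C) :
  Cdiff f (g z) a -> Cdiff g z b -> Cdiff (fun y => f (g y)) z (b * a)%C.
Proof.
rewrite !Cdiff_is_derive_ring. intros Hf Hg.
exact (@is_derive_comp C_AbsRing (AbsRing_NormedModule C_AbsRing) f g z a b Hf Hg).
Qed.

Lemma Cdiff_pow (z : C) (n : nat) : Cdiff (fun y => Cpow y (S n)) z (INR (S n) * Cpow z n)%C.
Proof.
induction n as [| n IH].
- replace (INR 1 * Cpow z 0)%C with (1 * 1 + z * 0)%C by (simpl; ring).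
  apply (Cdiff_mult (fun y => y) (fun _ => 1%R)); [apply Cdiff_id | apply Cdiff_const].
- replace (INR (S (S n)) * Cpow z (S n))%C with (1 * Cpow z (S n) + z * (INR (S n) * Cpow z n))%C
    by (rewrite (S_INR (S n)), RtoC_plus, Cpow_S; ring).
  exact (Cdiff_mult (fun y => y) (fun y => Cpow y (S n)) z _ _ (Cdiff_id z) IH).
Qed.

Lemma Cdiff_of_quadratic_remainder (f : C -> C) (z l : C) (K : R) :
  near z (fun y => Cmod (f y - f z - (y - z) * l)%C <= K * Cmod (y - z)%C ^ 2) -> Cdiff f z l.
Proof.
intros Hf eps Heps. pose proof (Rabs_pos K) as HK.
assert (Hd0 : 0 < eps / (Rabs K + 1)) by (apply Rdiv_lt_0_compat; lra).
refine (near_mono z _ _ _ (near_and z _ _ Hf (near_center z _ Hd0))). intros y [H1 H2].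
pose proof (Cmod_ge_0 (y - z)) as Hd. pose proof (Rle_abs K) as HKa.
assert (Hlt : (Rabs K + 1) * Cmod (y - z)%C <= eps).
{ apply Rmult_le_reg_r with (/ (Rabs K + 1)); [apply Rinv_0_lt_compat; lra |].
  replace ((Rabs K + 1) * Cmod (y - z)%C * / (Rabs K + 1)) with (Cmod (y - z)%C) by (field; lra). lra. }
nra.
Qed.

(** * The principal square root and the subordination criterion *)

(* The principal square root; the formula is only used, and only correct, on the half-plane
   [0 < Re u]. *)
Definition csqrt (u : C) : C :=
  (sqrt ((Cmod u + Re u) / 2), Im u / (2 * sqrt ((Cmod u + Re u) / 2))).

Lemma csqrt_Re_pos (u : C) : 0 < Re u -> 0 < Re (csqrt u).
Proof.
intros H. simpl. apply sqrt_lt_R0. pose proof (re_le_Cmod u). pose proof (Rle_abs (Re u)). lra.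
Qed.

Lemma csqrt_sq (u : C) : 0 < Re u -> (csqrt u * csqrt u)%C = u.
Proof.
intros H. pose proof (Cmod_ge_0 u) as H0. pose proof (Cmod2_alt u) as Hs.
destruct u as [x y]. unfold Re, Im in *. simpl fst in *. simpl snd in *.
set (m := Cmod (x, y)) in *. set (r := sqrt ((m + x) / 2)).
assert (Hr : r * r = (m + x) / 2) by (apply sqrt_sqrt; lra).
assert (Hr0 : 0 < r) by (apply sqrt_lt_R0; lra).
unfold csqrt, Cmult. simpl. fold m r. f_equal.
- replace (y / (2 * r) * (y / (2 * r))) with (y * y / (4 * (r * r))) by (field; lra).
  rewrite Hr. simpl in Hs. replace (y * y) with ((m - x) * (m + x)) by nra. field. lra.
- field. lra.
Qed.

Lemma csqrt_1 : csqrt 1%R = 1%R.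
Proof.
unfold csqrt. rewrite Cmod_1. simpl. replace ((1 + 1) / 2) with 1 by field. rewrite sqrt_1.
unfold RtoC. f_equal. field.
Qed.

Lemma Re_pos_of_disk1 (u : C) : Cmod (u - 1%R)%C < 1 -> 0 < Re u.
Proof.
intros H. pose proof (re_le_Cmod (u - 1%R)) as Hre. change (Re (u - 1%R)%C) with (Re u - 1) in Hre.
pose proof (Rabs_maj2 (Re u - 1)). lra.
Qed.

Lemma csqrt_disk1 (u : C) : Cmod (u - 1%R)%C < 1 -> Cmod (csqrt u - 1%R)%C < 1.
Proof.
intros H. pose proof (Re_pos_of_disk1 u H) as Hu.
pose proof (csqrt_Re_pos u Hu) as Hs. pose proof (csqrt_sq u Hu) as Hsq.
set (s := csqrt u) in *.
rewrite <- Hsq in H. replace (s * s - 1%R)%C with ((s - 1%R) * (s + 1%R))%C in H by ring.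
rewrite Cmod_mult in H.
assert (Hlt : Cmod (s - 1%R)%C ^ 2 < Cmod (s + 1%R)%C ^ 2).
{ rewrite !Cmod2_alt. destruct s as [x y]. unfold Re in Hs. simpl in *. nra. }
pose proof (Cmod_ge_0 (s - 1%R)). pose proof (Cmod_ge_0 (s + 1%R)). nra.
Qed.

Lemma csqrt_sub (u v : C) : 0 < Re u -> 0 < Re v ->
  Re (csqrt u) <= Cmod (csqrt v + csqrt u)%C /\
  (csqrt v - csqrt u = (v - u) * / (csqrt v + csqrt u))%C.
Proof.
intros Hu Hv. pose proof (csqrt_Re_pos u Hu). pose proof (csqrt_Re_pos v Hv).
assert (Hle : Re (csqrt u) <= Cmod (csqrt v + csqrt u)%C).
{ pose proof (re_le_Cmod (csqrt v + csqrt u)) as Hre.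
  change (Re (csqrt v + csqrt u)%C) with (Re (csqrt v) + Re (csqrt u)) in Hre.
  pose proof (Rle_abs (Re (csqrt v) + Re (csqrt u))). lra. }
split; [exact Hle |].
assert (Hnz : (csqrt v + csqrt u)%C <> 0%R) by (intros E; rewrite E, Cmod_0 in Hle; lra).
rewrite <- (csqrt_sq u Hu) at 2. rewrite <- (csqrt_sq v Hv) at 2. field. exact Hnz.
Qed.

Lemma Ccont_csqrt (u : C) : 0 < Re u -> Ccont csqrt u.
Proof.
intros Hu eps Heps. pose proof (csqrt_Re_pos u Hu) as Hs.
assert (Hd : 0 < eps * Re (csqrt u)) by nra.
refine (near_mono u _ _ _ (near_and u _ _ (near_Re_pos u Hu) (near_center u _ Hd))).
intros v [Hv Hvu]. destruct (csqrt_sub u v Hu Hv) as [Hle ->].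
assert (Hnz : (csqrt v + csqrt u)%C <> 0%R) by (intros E; rewrite E, Cmod_0 in Hle; lra).
rewrite Cmod_mult, Cmod_inv by exact Hnz.
apply Rmult_le_reg_r with (Cmod (csqrt v + csqrt u)%C); [lra |].
rewrite Rmult_assoc, Rinv_l by lra. rewrite Rmult_1_r.
pose proof (Rmult_le_compat_l eps _ _ (Rlt_le _ _ Heps) Hle). lra.
Qed.

Lemma Cdiff_csqrt (u : C) : 0 < Re u -> Cdiff csqrt u (/ (csqrt u + csqrt u))%C.
Proof.
intros Hu. pose proof (csqrt_Re_pos u Hu) as Hs.
apply (Cdiff_caratheodory csqrt (fun v => / (csqrt v + csqrt u))%C).
- apply (Ccont_comp Cinv (fun v => csqrt v + csqrt u)%C).
  + apply Ccont_inv. intros E.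
    assert (HRe : Re (csqrt u + csqrt u)%C = 0) by (rewrite E; reflexivity).
    change (Re (csqrt u) + Re (csqrt u) = 0) in HRe. lra.
  + intros eps Heps. refine (near_mono u _ _ _ (Ccont_csqrt u Hu eps Heps)). intros v Hv.
    replace (csqrt v + csqrt u - (csqrt u + csqrt u))%C with (csqrt v - csqrt u)%C by ring. exact Hv.
- refine (near_mono u _ _ _ (near_Re_pos u Hu)). intros v Hv. exact (proj2 (csqrt_sub u v Hu Hv)).
Qed.

Lemma subordinate_phi_car (p g : C -> C) :
  (forall z, inD z -> p z = g z) ->
  (forall z, inD z -> exists l, Cdiff g z l) ->
  (forall z, inD z -> Cmod (g z - 1%R)%C < 1 / 2) ->
  g 0%R = 1%R -> subordinate p phi_car.
Proof.
intros Hpg Hg Hdisk Hg0.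
set (u := fun z => (2%R * g z - 1%R)%C).
assert (Hu : forall z, inD z -> Cmod (u z - 1%R)%C < 1).
{ intros z Hz. unfold u. replace (2%R * g z - 1%R - 1%R)%C with (2%R * (g z - 1%R))%C by ring.
  rewrite Cmod_mult, Cmod_R, Rabs_pos_eq by lra. specialize (Hdisk z Hz). lra. }
exists (fun z => csqrt (u z) - 1%R)%C. split; [| split; [| split]].
- intros z Hz. destruct (Hg z Hz) as [l Hl].
  exists (2%R * l * / (csqrt (u z) + csqrt (u z)) + 0%R)%C. apply Cdiff_is_derive.
  apply (Cdiff_plus (fun y => csqrt (u y)) (fun _ => (- 1%R)%C)); [| apply Cdiff_const].
  apply (Cdiff_comp csqrt u); [apply Cdiff_csqrt, Re_pos_of_disk1, Hu, Hz |].
  replace (2%R * l)%C with (0%R * g z + 2%R * l + 0%R)%C by ring.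
  apply (Cdiff_plus (fun y => 2%R * g y)%C (fun _ => (- 1%R)%C)); [| apply Cdiff_const].
  apply (Cdiff_mult (fun _ => 2%R)); [apply Cdiff_const | exact Hl].
- intros z Hz. apply csqrt_disk1, Hu, Hz.
- unfold u. rewrite Hg0. replace (2%R * 1%R - 1%R)%C with (RtoC 1) by ring. rewrite csqrt_1. ring.
- intros z Hz. rewrite (Hpg z Hz). unfold phi_car.
  pose proof (csqrt_sq (u z) (Re_pos_of_disk1 _ (Hu z Hz))) as Hsq.
  replace (1%R + (csqrt (u z) - 1%R) + (csqrt (u z) - 1%R) * (csqrt (u z) - 1%R) / 2%R)%C
    with ((csqrt (u z) * csqrt (u z) + 1%R) / 2%R)%C by field.
  rewrite Hsq. unfold u. field.
Qed.

(** * Power series *)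

Lemma is_series_single {K : AbsRing} {V : NormedModule K} (m : nat) (v : V) :
  is_series (fun n => if Nat.eqb n m then v else zero) v.
Proof.
set (a := fun n => if Nat.eqb n m then v else zero).
assert (Hsum : forall N, (m <= N)%nat -> sum_n a N = v).
{ assert (Hzero : forall N, (N < m)%nat -> sum_n a N = zero).
  { induction N as [| N IH]; intros HN.
    - rewrite sum_O. unfold a. destruct (Nat.eqb_spec 0 m); [lia | reflexivity].
    - rewrite sum_Sn, IH by lia. unfold a. destruct (Nat.eqb_spec (S N) m); [lia |]. apply plus_zero_l. }
  induction N as [| N IH]; intros HN.
  - rewrite sum_O. unfold a. destruct (Nat.eqb_spec 0 m); [reflexivity | lia].
  - rewrite sum_Sn. unfold a at 2. destruct (Nat.eqb_spec (S N) m) as [<- | Hne].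
    + rewrite Hzero by lia. apply plus_zero_l.
    + rewrite IH by lia. apply plus_zero_r. }
apply filterlim_ext_loc with (fun _ => v); [| apply filterlim_const].
exists m. intros N HN. symmetry. apply Hsum. exact HN.
Qed.

Lemma Cmod_series_le2 (A B : nat -> C) (lA lB : C) (b : nat -> R) (L alpha beta : R) :
  0 <= alpha -> 0 <= beta -> is_seriesC A lA -> is_seriesC B lB -> is_series b L ->
  (forall n, alpha * Cmod (A n) + beta * Cmod (B n) <= b n) ->
  alpha * Cmod lA + beta * Cmod lB <= L.
Proof.
intros Ha Hb HA HB Hbl Hle.
assert (Hpartial : forall N, alpha * Cmod (sum_n A N) + beta * Cmod (sum_n B N) <= sum_n b N).
{ induction N as [| N IH].
  - rewrite !sum_O. apply Hle.
  - rewrite !sum_Sn. specialize (Hle (S N)).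
    pose proof (Cmod_triangle (sum_n A N) (A (S N))).
    pose proof (Cmod_triangle (sum_n B N) (B (S N))).
    change (alpha * Cmod (sum_n A N + A (S N))%C + beta * Cmod (sum_n B N + B (S N))%C
      <= sum_n b N + b (S N)).
    nra. }
assert (Hnorm : forall (S : nat -> C) (l : C), is_seriesC S l ->
  is_lim_seq (fun N => Cmod (sum_n S N)) (Cmod l)).
{ intros S l HS. eapply filterlim_comp; [exact HS | apply (@filterlim_norm C_AbsRing C_NormedModule)]. }
apply (is_lim_seq_le _ _ (alpha * Cmod lA + beta * Cmod lB) L Hpartial); [| exact Hbl].
apply is_lim_seq_plus'.
- exact (is_lim_seq_scal_l _ alpha _ (Hnorm A lA HA)).
- exact (is_lim_seq_scal_l _ beta _ (Hnorm B lB HB)).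
Qed.

Lemma Cmod_series_le (A : nat -> C) (lA : C) (b : nat -> R) (L : R) :
  is_seriesC A lA -> is_series b L -> (forall n, Cmod (A n) <= b n) -> Cmod lA <= L.
Proof.
intros HA Hb Hle.
replace (Cmod lA) with (1 * Cmod lA + 0 * Cmod lA) by ring.
apply (Cmod_series_le2 A A lA lA b); try lra; try assumption.
intros n. specialize (Hle n). lra.
Qed.

Definition PSeriesC (c : nat -> C) (z : C) : C :=
  epsilon (inhabits (RtoC 0)) (fun l => is_pseriesC c z l).

Definition PS_deriveC (c : nat -> C) (n : nat) : C := (INR (S n) * c (S n))%C.

Lemma pow_n_Cpow (z : C) (n : nat) : @pow_n C_AbsRing z n = Cpow z n.
Proof. induction n as [| n IH]; simpl; [reflexivity | now rewrite IH]. Qed.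

Lemma is_pseriesC_iff (c : nat -> C) (z l : C) :
  is_pseriesC c z l <-> is_seriesC (fun n => Cpow z n * c n)%C l.
Proof.
assert (E : forall n, scal (pow_n z n) (c n) = (Cpow z n * c n)%C).
{ intros n. rewrite pow_n_Cpow. reflexivity. }
split; intros H; refine (is_series_ext _ _ _ _ H); intros n; [exact (E n) | exact (eq_sym (E n))].
Qed.

Lemma is_seriesC_unique (A : nat -> C) (l1 l2 : C) : is_seriesC A l1 -> is_seriesC A l2 -> l1 = l2.
Proof.
intros H1 H2. eapply (@filterlim_locally_unique _ C_AbsRing C_NormedModule); [| exact H1 | exact H2].
apply Proper_StrongProper, eventually_filter.
Qed.

Lemma PSeriesC_unique (c : nat -> C) (z l : C) : is_pseriesC c z l -> PSeriesC c z = l.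
Proof.
intros H. refine (is_seriesC_unique _ _ _ _ H).
unfold PSeriesC. apply epsilon_spec. now exists l.
Qed.

Lemma is_pseriesC_dominated (c : nat -> C) (z : C) (b : nat -> R) :
  (forall n, Cmod (c n) * Cmod z ^ n <= b n) -> ex_series b -> is_pseriesC c z (PSeriesC c z).
Proof.
intros Hb Hex. unfold PSeriesC. apply epsilon_spec.
apply (@ex_series_le C_AbsRing C_CompleteNormedModule _ b); [| exact Hex].
intros n. change (Cmod (pow_n z n * c n)%C <= b n).
rewrite pow_n_Cpow, Cmod_mult, Cmod_pow, Rmult_comm. apply Hb.
Qed.

Lemma is_pseriesC_at_0 (c : nat -> C) : is_pseriesC c (RtoC 0) (c 0%nat).
Proof.
apply is_pseriesC_iff. eapply is_series_ext; [| apply (is_series_single 0 (c 0%nat))].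
intros [| n]; simpl.
- change (c 0%nat = RtoC 1 * c 0%nat)%C. ring.
- change (RtoC 0 = RtoC 0 * Cpow (RtoC 0) n * c (S n))%C. ring.
Qed.

Lemma ex_series_quadratic_geom (r : R) : 0 <= r < 1 ->
  ex_series (fun n => INR (S n) * INR (S (S n)) * r ^ n).
Proof.
intros Hr.
assert (Hrad : CV_radius (fun _ : nat => 1) = 1).
{ rewrite (CV_radius_finite_DAlembert _ 1); [now rewrite Rinv_1 | intros; apply R1_neq_R0 | lra |].
  apply is_lim_seq_ext with (fun _ => 1); [| apply is_lim_seq_const].
  intros n. unfold Rdiv. now rewrite Rinv_1, Rmult_1_r, Rabs_R1. }
assert (H : ex_pseries (PS_derive (PS_derive (fun _ : nat => 1))) r).
{ apply CV_radius_inside. rewrite !CV_radius_derive, Hrad. simpl. rewrite Rabs_pos_eq; lra. }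
eapply ex_series_ext; [| exact H]. intros n. unfold PS_derive.
change (pow_n r n * (INR (S n) * (INR (S (S n)) * 1)) = INR (S n) * INR (S (S n)) * r ^ n).
rewrite pow_n_pow. ring.
Qed.

(* The exponent [n - 1] is truncated; this is harmless since the factor [INR n] vanishes at
   [n = 0]. *)
Definition Cpow_remainder (y z : C) (n : nat) : C :=
  (Cpow y n - Cpow z n - INR n * (y - z) * Cpow z (n - 1))%C.

Lemma Cpow_remainder_S (y z : C) (n : nat) :
  Cpow_remainder y z (S n) = (y * Cpow_remainder y z n + INR n * (y - z) ^ 2 * Cpow z (n - 1))%C.
Proof.
unfold Cpow_remainder. destruct n as [| m]; [simpl; ring |].
replace (S (S m) - 1)%nat with (S m) by lia. replace (S m - 1)%nat with m by lia.
rewrite (S_INR (S m)), RtoC_plus, !Cpow_S. ring.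
Qed.

Lemma Cpow_remainder_bound (y z : C) (r : R) (n : nat) : 0 < r -> Cmod y <= r -> Cmod z <= r ->
  r * r * Cmod (Cpow_remainder y z n) <= INR n * INR n * r ^ n * Cmod (y - z)%C ^ 2.
Proof.
intros Hr Hy Hz. set (E := Cmod (y - z)%C ^ 2).
assert (HE : 0 <= E) by (apply pow_le, Cmod_ge_0).
induction n as [| n IH].
- unfold Cpow_remainder. simpl. replace (1 - 1 - 0%R * (y - z) * 1)%C with (RtoC 0) by ring.
  rewrite Cmod_0. lra.
- assert (Htail : r * r * (INR n * E * Cmod z ^ (n - 1)) <= INR n * (r * r ^ n * E)).
  { destruct n as [| m]; [simpl; lra |]. replace (S m - 1)%nat with m by lia.
    replace (r * r * (INR (S m) * E * Cmod z ^ m)) with ((INR (S m) * E * (r * r)) * Cmod z ^ m) by ring.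
    replace (INR (S m) * (r * r ^ S m * E)) with ((INR (S m) * E * (r * r)) * r ^ m) by (simpl; ring).
    apply Rmult_le_compat_l; [pose proof (pos_INR (S m)); apply Rmult_le_pos; nra |].
    apply pow_incr. split; [apply Cmod_ge_0 | exact Hz]. }
  rewrite Cpow_remainder_S.
  pose proof (Cmod_triangle (y * Cpow_remainder y z n) (INR n * (y - z) ^ 2 * Cpow z (n - 1))) as Htri.
  rewrite !Cmod_mult, !Cmod_pow, Cmod_R, Rabs_pos_eq in Htri by apply pos_INR. fold E in Htri.
  set (P := Cmod (Cpow_remainder y z n)) in *.
  assert (HP : 0 <= P) by apply Cmod_ge_0.
  assert (Hhead : r * r * (Cmod y * P) <= INR n * INR n * (r * r ^ n * E)).
  { replace (r * r * (Cmod y * P)) with (Cmod y * (r * r * P)) by ring.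
    replace (INR n * INR n * (r * r ^ n * E)) with (r * (INR n * INR n * r ^ n * E)) by ring.
    apply Rle_trans with (r * (r * r * P)); [apply Rmult_le_compat_r; nra | apply Rmult_le_compat_l; lra]. }
  assert (HT : 0 <= r * r ^ n * E).
  { apply Rmult_le_pos; [apply Rmult_le_pos; [lra | apply pow_le; lra] | exact HE]. }
  pose proof (pos_INR n).
  replace (INR (S n) * INR (S n) * r ^ S n * E) with ((INR n + 1) * (INR n + 1) * (r * r ^ n * E))
    by (rewrite S_INR; simpl; ring).
  apply Rle_trans with (r * r * (Cmod y * P) + r * r * (INR n * E * Cmod z ^ (n - 1))).
  + rewrite <- Rmult_plus_distr_l. apply Rmult_le_compat_l; nra.
  + nra.
Qed.

Section BoundedCoefficients.

Variables (c : nat -> C) (M : R).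
Hypothesis c_bounded : forall n, Cmod (c n) <= M.

Lemma is_pseriesC_bounded (z : C) : Cmod z < 1 -> is_pseriesC c z (PSeriesC c z).
Proof.
intros Hz. apply (is_pseriesC_dominated _ _ (fun n => M * Cmod z ^ n)).
- intros n. apply Rmult_le_compat_r; [apply pow_le, Cmod_ge_0 | apply c_bounded].
- apply (@ex_series_scal_l R_AbsRing R_NormedModule M (fun n => Cmod z ^ n)).
  exists (/ (1 - Cmod z)). apply is_series_geom. rewrite Rabs_pos_eq; [exact Hz | apply Cmod_ge_0].
Qed.

Lemma is_pseriesC_derive_bounded (z : C) : Cmod z < 1 ->
  is_pseriesC (PS_deriveC c) z (PSeriesC (PS_deriveC c) z).
Proof.
intros Hz. pose proof (Cmod_ge_0 z) as Hz0.
apply (is_pseriesC_dominated _ _ (fun n => M * (INR (S n) * INR (S (S n)) * Cmod z ^ n))).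
- intros n. unfold PS_deriveC. rewrite Cmod_mult, Cmod_R, Rabs_pos_eq by apply pos_INR.
  pose proof (c_bounded (S n)). pose proof (Cmod_ge_0 (c (S n))). pose proof (pow_le _ n Hz0).
  assert (HS : INR (S n) <= INR (S n) * INR (S (S n))).
  { rewrite !S_INR. pose proof (pos_INR n). nra. }
  pose proof (pos_INR (S n)).
  replace (M * (INR (S n) * INR (S (S n)) * Cmod z ^ n))
    with (INR (S n) * INR (S (S n)) * M * Cmod z ^ n) by ring.
  apply Rmult_le_compat_r; [assumption |]. apply Rmult_le_compat; assumption.
- apply (@ex_series_scal_l R_AbsRing R_NormedModule M), ex_series_quadratic_geom. lra.
Qed.

Lemma PSeriesC_derive_shift (z : C) : Cmod z < 1 ->
  is_seriesC (fun n => INR n * c n * Cpow z (n - 1))%C (PSeriesC (PS_deriveC c) z).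
Proof.
intros Hz.
assert (E : plus (PSeriesC (PS_deriveC c) z) (opp (INR 0 * c 0%nat * Cpow z (0 - 1))%C)
  = PSeriesC (PS_deriveC c) z).
{ change (PSeriesC (PS_deriveC c) z + - (INR 0 * c 0%nat * Cpow z (0 - 1)) = PSeriesC (PS_deriveC c) z)%C.
  simpl. ring. }
apply is_series_decr_1.
match goal with |- is_series _ ?L => replace L with (PSeriesC (PS_deriveC c) z) by (symmetry; exact E) end.
eapply is_series_ext; [| apply is_pseriesC_iff, is_pseriesC_derive_bounded, Hz].
intros n. unfold PS_deriveC. simpl (S n - 1)%nat. rewrite Nat.sub_0_r.
change (Cpow z n * (INR (S n) * c (S n)) = INR (S n) * c (S n) * Cpow z n)%C. ring.
Qed.

Lemma Cmod_coeff_Cpow_remainder_le (y z : C) (r : R) (n : nat) : 0 < r -> Cmod y <= r -> Cmod z <= r ->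
  Cmod (c n * Cpow_remainder y z n)%C
  <= M / (r * r) * Cmod (y - z)%C ^ 2 * (INR (S n) * INR (S (S n)) * r ^ n).
Proof.
intros Hr Hy Hz. rewrite Cmod_mult.
assert (HM : 0 <= M) by (eapply Rle_trans; [apply Cmod_ge_0 | apply (c_bounded 0)]).
set (E := Cmod (y - z)%C ^ 2). assert (HE : 0 <= E) by (apply pow_le, Cmod_ge_0).
pose proof (Cpow_remainder_bound y z r n Hr Hy Hz) as Hrem. fold E in Hrem.
set (P := Cmod (Cpow_remainder y z n)) in *.
assert (HP : P <= / (r * r) * (INR n * INR n * r ^ n * E)).
{ apply Rmult_le_reg_l with (r * r); [nra |].
  rewrite <- Rmult_assoc, Rinv_r, Rmult_1_l by nra. exact Hrem. }
assert (Hn : INR n * INR n <= INR (S n) * INR (S (S n))) by (rewrite !S_INR; pose proof (pos_INR n); nra).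
assert (Hr2 : 0 <= / (r * r)) by (left; apply Rinv_0_lt_compat; nra).
apply Rle_trans with (M * (/ (r * r) * (INR n * INR n * r ^ n * E))).
- apply Rmult_le_compat; [apply Cmod_ge_0 | apply Cmod_ge_0 | apply c_bounded | exact HP].
- unfold Rdiv. replace (M * (/ (r * r) * (INR n * INR n * r ^ n * E)))
    with (M * / (r * r) * E * r ^ n * (INR n * INR n)) by ring.
  replace (M * / (r * r) * E * (INR (S n) * INR (S (S n)) * r ^ n))
    with (M * / (r * r) * E * r ^ n * (INR (S n) * INR (S (S n)))) by ring.
  apply Rmult_le_compat_l; [| exact Hn].
  apply Rmult_le_pos; [apply Rmult_le_pos; [apply Rmult_le_pos |] | apply pow_le]; try assumption; lra.
Qed.

Lemma PSeriesC_remainder_bound (y z : C) (r : R) : 0 < r < 1 -> Cmod y <= r -> Cmod z <= r ->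
  Cmod (PSeriesC c y - PSeriesC c z - (y - z) * PSeriesC (PS_deriveC c) z)%C
  <= M / (r * r) * Cmod (y - z)%C ^ 2 * Series (fun n => INR (S n) * INR (S (S n)) * r ^ n).
Proof.
intros Hr Hy Hz.
pose proof (Series_correct _ (ex_series_quadratic_geom r ltac:(lra))) as HB.
pose proof (proj1 (is_pseriesC_iff _ _ _) (is_pseriesC_bounded y ltac:(lra))) as Sy.
pose proof (proj1 (is_pseriesC_iff _ _ _) (is_pseriesC_bounded z ltac:(lra))) as Sz.
pose proof (@is_series_scal C_AbsRing C_NormedModule (y - z)%C _ _ (PSeriesC_derive_shift z ltac:(lra)))
  as Sd.
pose proof (is_series_minus _ _ _ _ (is_series_minus _ _ _ _ Sy Sz) Sd) as Srem.
apply (Cmod_series_le _ _ _ _ Srem (@is_series_scal_l R_AbsRing R_NormedModule _ _ _ HB)).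
intros n.
change (Cmod (Cpow y n * c n + - (Cpow z n * c n) + - ((y - z) * (INR n * c n * Cpow z (n - 1))))%C
  <= M / (r * r) * Cmod (y - z)%C ^ 2 * (INR (S n) * INR (S (S n)) * r ^ n)).
replace (Cpow y n * c n + - (Cpow z n * c n) + - ((y - z) * (INR n * c n * Cpow z (n - 1))))%C
  with (c n * Cpow_remainder y z n)%C by (unfold Cpow_remainder; ring).
apply Cmod_coeff_Cpow_remainder_le; lra.
Qed.

Lemma Cdiff_PSeriesC (z : C) : Cmod z < 1 -> Cdiff (PSeriesC c) z (PSeriesC (PS_deriveC c) z).
Proof.
intros Hz. set (r := (1 + Cmod z) / 2). pose proof (Cmod_ge_0 z).
apply (Cdiff_of_quadratic_remainder _ _ _
  (M / (r * r) * Series (fun n => INR (S n) * INR (S (S n)) * r ^ n))).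
refine (near_mono z _ _ _ (near_ball z r ltac:(unfold r; lra))). intros y Hy.
rewrite Rmult_assoc, (Rmult_comm (Series _)), <- Rmult_assoc.
apply PSeriesC_remainder_bound; unfold r in *; lra.
Qed.

End BoundedCoefficients.

(** * The coefficient condition *)

Lemma term_le_Series (b : nat -> R) (k : nat) : (forall n, 0 <= b n) -> ex_series b -> b k <= Series b.
Proof.
intros Hb Hex. rewrite <- (is_series_unique _ _ (@is_series_single R_AbsRing R_NormedModule k (b k))).
apply Series_le; [| exact Hex].
intros n. destruct (Nat.eqb_spec n k) as [-> |].
- split; [apply Hb | lra].
- split; [change (0 <= 0); lra | apply Hb].
Qed.

Definition coeff_weight (a : nat -> C) (k : nat) : R := (2 * INR (k + 2) - 1) * Cmod (a (k + 2)%nat).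

Section CoefficientCondition.

Variable a : nat -> C.
Hypothesis weight_ex : ex_series (coeff_weight a).
Hypothesis weight_le_1 : Series (coeff_weight a) <= 1.

Local Notation G := (PSeriesC (fun n => coeffs a (S n))).
Local Notation F := (PSeriesC (PS_deriveC (coeffs a))).

Lemma coeff_weight_S (n : nat) : coeff_weight a n = (2 * INR (S n) + 1) * Cmod (a (S (S n))).
Proof. unfold coeff_weight. replace (n + 2)%nat with (S (S n)) by lia. rewrite !S_INR. ring. Qed.

Lemma INR_Cmod_coeffs_le_1 (n : nat) : INR n * Cmod (coeffs a n) <= 1.
Proof.
destruct n as [| [| n]]; simpl coeffs.
- rewrite Cmod_0. lra.
- rewrite Cmod_1. simpl. lra.
- assert (Hw : forall k, 0 <= coeff_weight a k).
  { intros k. rewrite coeff_weight_S. pose proof (pos_INR (S k)).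
    apply Rmult_le_pos; [lra | apply Cmod_ge_0]. }
  pose proof (term_le_Series _ n Hw weight_ex) as Hn. rewrite coeff_weight_S in Hn.
  pose proof (Cmod_ge_0 (a (S (S n)))). rewrite !S_INR in *. pose proof (pos_INR n). nra.
Qed.

Lemma Cmod_coeffs_le_1 (n : nat) : Cmod (coeffs a n) <= 1.
Proof.
destruct n as [| n]; [simpl; rewrite Cmod_0; lra |].
pose proof (INR_Cmod_coeffs_le_1 (S n)). pose proof (Cmod_ge_0 (coeffs a (S n))).
rewrite S_INR in *. pose proof (pos_INR n). nra.
Qed.

Lemma Cmod_PS_deriveC_coeffs_le_1 (n : nat) : Cmod (PS_deriveC (coeffs a) n) <= 1.
Proof.
unfold PS_deriveC. rewrite Cmod_mult, Cmod_R, Rabs_pos_eq by apply pos_INR.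
apply INR_Cmod_coeffs_le_1.
Qed.

Lemma is_series_G (z : C) : inD z -> is_seriesC (fun n => Cpow z n * coeffs a (S n))%C (G z).
Proof.
intros Hz. apply is_pseriesC_iff, (is_pseriesC_bounded _ _ (fun n => Cmod_coeffs_le_1 (S n))), Hz.
Qed.

Lemma is_series_F (z : C) : inD z -> is_seriesC (fun n => Cpow z n * PS_deriveC (coeffs a) n)%C (F z).
Proof. intros Hz. apply is_pseriesC_iff, (is_pseriesC_bounded _ _ Cmod_PS_deriveC_coeffs_le_1), Hz. Qed.

Lemma is_series_G_sub_1 (z : C) : inD z ->
  is_seriesC (fun n => Cpow z (S n) * a (S (S n)))%C (G z - 1%R)%C.
Proof.
intros Hz.
pose proof (is_series_G z Hz) as HG.
apply (is_series_incr_1 (fun n => Cpow z n * coeffs a (S n))%C).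
match goal with |- is_series _ ?L =>
  replace L with (G z) by (simpl; change (G z = G z - 1%R + 1 * 1%R)%C; ring) end.
exact HG.
Qed.

Lemma is_series_F_sub_G (z : C) : inD z ->
  is_seriesC (fun n => Cpow z (S n) * (INR (S n) * a (S (S n))))%C (F z - G z)%C.
Proof.
intros Hz.
pose proof (is_series_G z Hz) as HG.
pose proof (is_series_F z Hz) as HF.
apply (is_series_incr_1 (fun n => Cpow z n * (INR n * coeffs a (S n)))%C).
match goal with |- is_series _ ?L =>
  replace L with (F z - G z)%C by (simpl; change (F z - G z = F z - G z + 1 * (0%R * 1%R))%C; ring) end.
eapply is_series_ext; [| exact (is_series_minus _ _ _ _ HF HG)].
intros n. unfold PS_deriveC. rewrite S_INR, RtoC_plus.
change (Cpow z n * ((INR n + 1%R) * coeffs a (S n)) + - (Cpow z n * coeffs a (S n))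
  = Cpow z n * (INR n * coeffs a (S n)))%C. ring.
Qed.

Lemma quotient_estimate (z : C) : inD z -> 2 * Cmod (F z - G z)%C + Cmod (G z - 1%R)%C <= Cmod z.
Proof.
intros Hz. pose proof (Cmod_ge_0 z) as Hz0.
apply Rle_trans with (Cmod z * Series (coeff_weight a)); [| unfold inD in Hz; nra].
rewrite <- (Rmult_1_l (Cmod (G z - 1%R)%C)).
apply (Cmod_series_le2 _ _ _ _ _ _ 2 1 ltac:(lra) ltac:(lra)
  (is_series_F_sub_G z Hz) (is_series_G_sub_1 z Hz)
  (@is_series_scal_l R_AbsRing R_NormedModule (Cmod z) _ _ (Series_correct _ weight_ex))).
intros n.
change (2 * Cmod (Cpow z (S n) * (INR (S n) * a (S (S n))))%C + 1 * Cmod (Cpow z (S n) * a (S (S n)))%C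
  <= Cmod z * coeff_weight a n).
rewrite coeff_weight_S, !Cmod_mult, Cmod_R, Rabs_pos_eq, Cmod_pow by apply pos_INR.
assert (Hpow : Cmod z ^ S n <= Cmod z).
{ change (Cmod z ^ S n) with (Cmod z * Cmod z ^ n). apply Rle_trans with (Cmod z * 1); [| lra].
  apply Rmult_le_compat_l; [exact Hz0 |].
  rewrite <- (pow1 n). apply pow_incr. unfold inD in Hz. lra. }
pose proof (pos_INR (S n)). pose proof (Cmod_ge_0 (a (S (S n)))).
replace (2 * (Cmod z ^ S n * (INR (S n) * Cmod (a (S (S n))))) + 1 * (Cmod z ^ S n * Cmod (a (S (S n)))))
  with ((2 * INR (S n) + 1) * Cmod (a (S (S n))) * Cmod z ^ S n) by ring.
rewrite (Rmult_comm (Cmod z)). apply Rmult_le_compat_l; [nra | exact Hpow].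
Qed.

Lemma quotient_near_1 (z : C) : inD z -> G z <> 0%R /\ Cmod (F z / G z - 1%R)%C < 1 / 2.
Proof.
intros Hz. pose proof (quotient_estimate z Hz) as Hest. unfold inD in Hz.
assert (HG : 1 - Cmod (G z - 1%R)%C <= Cmod (G z)).
{ pose proof (Cmod_triangle (G z) (- (G z - 1%R))) as Htri. rewrite Cmod_opp in Htri.
  replace (G z + - (G z - 1%R))%C with (RtoC 1) in Htri by ring. rewrite Cmod_1 in Htri. lra. }
pose proof (Cmod_ge_0 (F z - G z)%C).
assert (HG0 : G z <> 0%R) by (apply Cmod_gt_0; lra).
split; [exact HG0 |].
replace (F z / G z - 1%R)%C with ((F z - G z) / G z)%C by (field; exact HG0).
rewrite Cmod_div by exact HG0.
apply Rmult_lt_reg_r with (Cmod (G z)); [lra |].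
unfold Rdiv. rewrite Rmult_assoc, Rinv_l by lra. lra.
Qed.

Lemma G_at_0 : G 0%R = 1%R.
Proof. apply PSeriesC_unique, is_pseriesC_at_0. Qed.

Lemma F_at_0 : F 0%R = 1%R.
Proof.
rewrite (PSeriesC_unique _ _ _ (is_pseriesC_at_0 _)). unfold PS_deriveC. simpl. ring.
Qed.

Lemma Cdiff_quotient (z : C) : inD z -> exists l, Cdiff (fun y => F y / G y)%C z l.
Proof.
intros Hz. eexists. apply (Cdiff_mult F (fun y => / G y)%C).
- exact (Cdiff_PSeriesC _ _ Cmod_PS_deriveC_coeffs_le_1 z Hz).
- apply (Cdiff_comp Cinv G).
  + apply Cdiff_inv, (quotient_near_1 z Hz).
  + exact (Cdiff_PSeriesC _ _ (fun n => Cmod_coeffs_le_1 (S n)) z Hz).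
Qed.

Variable f : C -> C.
Hypothesis f_series : forall z, inD z -> is_pseriesC (coeffs a) z (f z).

Lemma f_eq_mul_G (z : C) : inD z -> f z = (z * G z)%C.
Proof.
intros Hz.
pose proof (proj1 (is_pseriesC_iff _ _ _) (f_series z Hz)) as Hf.
pose proof (is_series_G z Hz) as HG.
apply (is_seriesC_unique (fun n => Cpow z (S n) * coeffs a (S n))%C).
- apply (is_series_incr_1 (fun n => Cpow z n * coeffs a n)%C).
  match goal with |- is_series _ ?L =>
    replace L with (f z) by (simpl; change (f z = f z + 1 * 0%R)%C; ring) end.
  exact Hf.
- eapply is_series_ext; [| exact (@is_series_scal C_AbsRing C_NormedModule z _ _ HG)].
  intros n. change (z * (Cpow z n * coeffs a (S n)) = Cpow z (S n) * coeffs a (S n))%C.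
  rewrite Cpow_S. ring.
Qed.

Lemma Cdiff_f (z : C) : inD z -> Cdiff f z (F z).
Proof.
intros Hz. apply (Cdiff_ext_near (PSeriesC (coeffs a))).
- refine (near_mono z _ _ _ (near_ball z 1 Hz)). intros y Hy.
  apply PSeriesC_unique, f_series, Hy.
- exact (Cdiff_PSeriesC _ _ Cmod_coeffs_le_1 z Hz).
Qed.

Lemma C_derive_f (z : C) : inD z -> C_derive f z = F z.
Proof. intros Hz. apply is_C_derive_unique, Cdiff_is_derive, Cdiff_f, Hz. Qed.

Lemma Scar_of_coeff_weight : Scar f.
Proof.
assert (H0 : inD 0%R) by (unfold inD; rewrite Cmod_0; lra).
split; [split; [| split] | split].
- intros z Hz. exists (F z). apply Cdiff_is_derive, Cdiff_f, Hz.
- rewrite (f_eq_mul_G _ H0). ring.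
- rewrite (C_derive_f _ H0). exact F_at_0.
- intros z Hz Hz0. rewrite (f_eq_mul_G z Hz). apply Cmult_neq_0; [exact Hz0 | apply (quotient_near_1 z Hz)].
- apply (subordinate_phi_car _ (fun y => F y / G y)%C).
  + intros z Hz. unfold starlike_quot. destruct (Req_EM_T (Cmod z) 0) as [E | E].
    * apply Cmod_eq_0 in E. subst z. rewrite F_at_0, G_at_0. field.
    * assert (Hz0 : z <> 0%R) by (intros ->; apply E, Cmod_0).
      rewrite (C_derive_f z Hz), (f_eq_mul_G z Hz). field.
      split; [apply (quotient_near_1 z Hz) | exact Hz0].
  + exact Cdiff_quotient.
  + intros z Hz. apply (quotient_near_1 z Hz).
  + rewrite F_at_0, G_at_0. field.
Qed.

End CoefficientCondition.

(** * Perturbations of the identity by a monomial *)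

Lemma exists_angle (x y : R) : x * x + y * y = 1 -> exists t, cos t = x /\ sin t = y.
Proof.
intros H. assert (Hx : -1 <= x <= 1) by (split; nra).
assert (Hs : sin (acos x) = Rabs y).
{ rewrite sin_acos by exact Hx. replace (1 - x²) with (y²) by (unfold Rsqr; lra). apply sqrt_Rsqr_abs. }
destruct (Rle_dec 0 y) as [Hy | Hy].
- exists (acos x). rewrite cos_acos, Hs, Rabs_pos_eq by (auto || lra). auto.
- exists (- acos x). rewrite cos_neg, sin_neg, Hs, cos_acos, Rabs_left1 by (auto || lra).
  split; [reflexivity | ring].
Qed.

Lemma de_moivre (t : R) (k : nat) : Cpow (cos t, sin t) k = (cos (INR k * t), sin (INR k * t)).
Proof.
induction k as [| k IH].
- simpl. rewrite Rmult_0_l, cos_0, sin_0. reflexivity.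
- rewrite Cpow_S, IH, S_INR. unfold Cmult. simpl.
  replace ((INR k + 1) * t) with (t + INR k * t) by ring.
  rewrite cos_plus, sin_plus. f_equal; ring.
Qed.

Lemma Cpow_root (w : C) (N : nat) : (0 < N)%nat -> exists z, Cpow z N = w.
Proof.
intros HN. destruct (Ceq_dec w 0%R) as [-> | Hw].
- exists (RtoC 0). destruct N as [| N]; [lia |]. rewrite Cpow_S. ring.
- pose proof (proj1 (Cmod_gt_0 w) Hw) as Hm. set (m := Cmod w) in *.
  assert (Hunit : (Re w / m) * (Re w / m) + (Im w / m) * (Im w / m) = 1).
  { pose proof (Cmod2_alt w) as E. fold m in E.
    replace ((Re w / m) * (Re w / m) + (Im w / m) * (Im w / m)) with ((Re w ^ 2 + Im w ^ 2) / m ^ 2)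
      by (field; lra).
    rewrite <- E. field. lra. }
  destruct (exists_angle _ _ Hunit) as [t [Hc Hs]].
  assert (HNR : 0 < INR N) by (apply lt_0_INR; exact HN).
  exists (Rpower m (/ INR N) * (cos (t / INR N), sin (t / INR N)))%C.
  rewrite Cpow_mult_l, <- RtoC_pow, de_moivre, <- Rpower_pow by (apply exp_pos).
  rewrite Rpower_mult. replace (/ INR N * INR N) with 1 by (field; lra).
  replace (INR N * (t / INR N)) with t by (field; lra). rewrite Rpower_1, Hc, Hs by exact Hm.
  destruct w as [p q]. unfold Re, Im in *. simpl in *. unfold RtoC, Cmult. simpl.
  f_equal; field; lra.
Qed.

Lemma phi_car_neq_half (w : C) : inD w -> phi_car w <> RtoC (1 / 2).
Proof.
intros Hw E. unfold inD in Hw.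
assert (Hsq : ((1%R + w) * (1%R + w))%C = RtoC 0).
{ replace ((1%R + w) * (1%R + w))%C with (2%R * (phi_car w - RtoC (1 / 2)))%C
    by (unfold phi_car; rewrite RtoC_div by lra; field).
  rewrite E. ring. }
apply (f_equal Cmod) in Hsq. rewrite Cmod_mult, Cmod_0 in Hsq.
assert (H1w : (1%R + w)%C = RtoC 0) by (apply Cmod_eq_0; nra).
assert (Hm1 : w = (- 1%R)%C) by (replace w with ((1%R + w) - 1%R)%C by ring; rewrite H1w; ring).
rewrite Hm1, Cmod_opp, Cmod_1 in Hw. lra.
Qed.

Lemma C_derive_id_plus_monomial (an : C) (N : nat) (z : C) :
  C_derive (fun y => y + an * Cpow y (S N))%C z = (1%R + INR (S N) * an * Cpow z N)%C.
Proof.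
apply is_C_derive_unique, Cdiff_is_derive.
replace (1%R + INR (S N) * an * Cpow z N)%C
  with (1%R + (0%R * Cpow z (S N) + an * (INR (S N) * Cpow z N)))%C by ring.
apply (Cdiff_plus (fun y => y)); [apply Cdiff_id |].
apply (Cdiff_mult (fun _ => an)); [apply Cdiff_const | apply Cdiff_pow].
Qed.

Lemma exists_monomial_root_in_disk (an : C) (m : R) (N : nat) : (0 < N)%nat -> 0 < m < Cmod an ->
  exists z, inD z /\ z <> 0%R /\ (an * Cpow z N)%C = (- m)%C.
Proof.
intros HN [Hm0 Hlt].
assert (Han : an <> 0%R) by (intros E; rewrite E, Cmod_0 in Hlt; lra).
destruct (Cpow_root (- m / an)%C N HN) as [z Hz].
assert (Hkey : (an * Cpow z N)%C = (- m)%C) by (rewrite Hz; field; exact Han).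
exists z. split; [| split; [| exact Hkey]].
- unfold inD. apply Rnot_le_lt. intros Hge.
  pose proof (f_equal Cmod Hkey) as Hmod.
  rewrite Cmod_mult, Cmod_pow, Cmod_opp, Cmod_R, Rabs_pos_eq in Hmod by lra.
  pose proof (Rmult_le_compat_l _ _ _ (Cmod_ge_0 an) (pow_R1_Rle (Cmod z) N Hge)). lra.
- intros ->. destruct N as [| N]; [lia |].
  rewrite Cpow_S, Cmult_0_l, Cmult_0_r in Hkey. injection Hkey. lra.
Qed.

Lemma starlike_quot_monomial (an : C) (N : nat) (z : C) (m : R) :
  z <> 0%R -> m <> 1 -> (an * Cpow z N)%C = (- m)%C ->
  starlike_quot (fun y => (y + an * Cpow y (S N))%C) z = RtoC ((1 - INR (S N) * m) / (1 - m)).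
Proof.
intros Hz0 Hm1 Hkey. unfold starlike_quot.
destruct (Req_EM_T (Cmod z) 0) as [E | _]; [apply Cmod_eq_0 in E; contradiction |].
rewrite C_derive_id_plus_monomial, Cpow_S.
replace (z + an * (z * Cpow z N))%C with (z * (1%R + an * Cpow z N))%C by ring.
replace (INR (S N) * an * Cpow z N)%C with (INR (S N) * (an * Cpow z N))%C by ring.
rewrite Hkey, RtoC_div, RtoC_minus, RtoC_mult, RtoC_minus by lra.
field. split; [| exact Hz0]. intros E. injection E. intros. lra.
Qed.

Lemma Scar_monomial_coeff_bound (n : nat) (an : C) : (2 <= n)%nat ->
  Scar (fun z => (z + an * Cpow z n)%C) -> Cmod an <= 1 / (2 * INR n - 1).
Proof.
intros Hn [_ [_ [w [_ [Hw [_ Hsub]]]]]]. apply Rnot_lt_le. intros Hlt.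
destruct n as [| N]; [lia |]. rewrite S_INR in *.
assert (HN : 1 <= INR N) by (apply (le_INR 1); lia).
set (m := 1 / (2 * (INR N + 1) - 1)) in *.
assert (Hm : m * (2 * INR N + 1) = 1) by (unfold m; field; lra).
assert (Hm0 : 0 < m) by (unfold m; apply Rdiv_lt_0_compat; lra).
destruct (exists_monomial_root_in_disk an m N ltac:(lia) (conj Hm0 Hlt)) as [z [HzD [Hz0 Hkey]]].
apply (phi_car_neq_half (w z) (Hw z HzD)). rewrite <- (Hsub z HzD).
rewrite (starlike_quot_monomial an N z m Hz0 ltac:(nra) Hkey), S_INR.
f_equal. field_simplify_eq; nra.
Qed.

Lemma Scar_monomial_of_coeff_bound (n : nat) (an : C) : (2 <= n)%nat ->
  Cmod an <= 1 / (2 * INR n - 1) -> Scar (fun z => (z + an * Cpow z n)%C).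
Proof.
intros Hn Han.
assert (HnR : 2 <= INR n) by (apply (le_INR 2) in Hn; simpl in Hn; lra).
set (a := fun k => if Nat.eqb k n then an else RtoC 0).
assert (Hw : is_series (coeff_weight a) ((2 * INR n - 1) * Cmod an)).
{ eapply is_series_ext; [| apply (@is_series_single R_AbsRing R_NormedModule (n - 2))].
  intros k. unfold coeff_weight, a.
  destruct (Nat.eqb_spec k (n - 2)), (Nat.eqb_spec (k + 2) n); try lia.
  - now replace (k + 2)%nat with n by lia.
  - rewrite Cmod_0. change (0 = (2 * INR (k + 2) - 1) * 0). ring. }
apply (Scar_of_coeff_weight a).
- now exists ((2 * INR n - 1) * Cmod an).
- rewrite (is_series_unique _ _ Hw).
  apply Rle_trans with ((2 * INR n - 1) * (1 / (2 * INR n - 1))).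
  + apply Rmult_le_compat_l; lra.
  + right. field. lra.
- intros z Hz. apply is_pseriesC_iff.
  eapply is_series_ext;
    [| exact (is_series_plus _ _ _ _ (is_series_single 1 z) (is_series_single n (an * Cpow z n)%C))].
  intros [| [| k]]; simpl coeffs.
  + destruct (Nat.eqb_spec 0 n); [lia |]. change (0%R + 0%R = Cpow z 0 * 0%R)%C. ring.
  + destruct (Nat.eqb_spec 1 n); [lia |]. change (z + 0%R = Cpow z 1 * 1%R)%C. simpl. ring.
  + unfold a. destruct (Nat.eqb_spec (S (S k)) n) as [<- |]; simpl (Nat.eqb _ 1).
    * change (0%R + an * Cpow z (S (S k)) = Cpow z (S (S k)) * an)%C. ring.
    * change (0%R + 0%R = Cpow z (S (S k)) * 0%R)%C. ring.
Qed.

Theorem corollary3p3 :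
  (forall (a : nat -> C) (f : C -> C),
     (forall z, inD z -> @is_pseries C_AbsRing C_NormedModule (coeffs a) z (f z)) ->
     ex_series (fun k => (2 * INR (k + 2) - 1) * Cmod (a (k + 2)%nat)) ->
     Series (fun k => (2 * INR (k + 2) - 1) * Cmod (a (k + 2)%nat)) <= 1 ->
     Scar f)
  /\
  (forall (n : nat) (an : C), (2 <= n)%nat ->
     (Scar (fun z => (z + an * Cpow z n)%C) <-> Cmod an <= 1 / (2 * INR n - 1))).
Proof.
split.
- intros a f Hf Hex Hle. exact (Scar_of_coeff_weight a Hex Hle f Hf).
- intros n an Hn. split.
  + exact (Scar_monomial_coeff_bound n an Hn).
  + exact (Scar_monomial_of_coeff_bound n an Hn).
Qed.
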